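(* Let $n\ge 1$, $D\ge 1$, and let $X_n=\{\mathbf{x}^0,\ldots,\mathbf{x}^{n-1}\}\subseteq\{0,1\}^D$ consist of $n$ pairwise distinct vectors. Let $d=2\lceil\log_2 n\rceil$. Then there exist subsets $S_0,\ldots,S_{d-1}\subseteq\{0,\ldots,D-1\}$ such that the map $\mathbf{f}:\{0,1\}^D\to\{0,1\}^d$ defined by $f_k(\mathbf{x})=\bigoplus_{\ell\in S_k}x_\ell$ (the parity of the entries of $\mathbf{x}$ indexed by $S_k$) satisfies $\mathbf{f}(\mathbf{x}^i)\ne\mathbf{f}(\mathbf{x}^j)$ for all $i\ne j$.
   Context: Such an $\mathbf{f}$ is a two-layer network whose activation functions are parity functions of subsets of the input variables. *)

From mathcomp Require Import all_boot.
Set Implicit Arguments. Unset Strict Implicit. Unset Printing Implicit Defensive.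

(* ceil(log2 n) is [up_log 2 n] (smallest e with n <= 2^e; 0 for n <= 1). *)

Definition parity (D : nat) (S : {set 'I_D}) (x : {ffun 'I_D -> bool}) : bool :=
  \big[addb/false]_(l in S) x l.

Definition parity_map (D d : nat) (S : 'I_d -> {set 'I_D})
  (x : {ffun 'I_D -> bool}) : {ffun 'I_d -> bool} :=
  [ffun k => parity (S k) x].

From mathcomp Require Import all_boot.
Set Implicit Arguments. Unset Strict Implicit. Unset Printing Implicit Defensive.

(* For x <> y, exactly half of the subsets S of indices give x and y the same
   parity: toggling one index where x and y differ swaps the two halves.
   Averaging over S, some S leaves at most half of any set of pairs of distinct
   points unseparated; after 2 * ceil(log2 n) such halvings fewer than
   n^2 / 2^(2 ceil(log2 n)) <= 1 ordered pairs, hence none, remain. *)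

Lemma exists_le_mean (I : finType) (f : I -> nat) (c : nat) :
  0 < #|I| -> \sum_i f i <= #|I| * c -> exists i, f i <= c.
Proof.
move=> I_gt0 sum_le; case: (pickP (fun i => f i <= c)) => [i fi_le | f_gt].
  by exists i.
have : \sum_(i : I) c.+1 <= \sum_i f i by apply: leq_sum => i _; rewrite ltnNge f_gt.
move/leq_trans/(_ sum_le); rewrite sum_nat_const leq_mul2l ltnn orbF.
by rewrite eqn0Ngt I_gt0.
Qed.

Section Parity.
Variable D : nat.
Implicit Types (x y v : {ffun 'I_D -> bool}) (T : {set 'I_D}).

Lemma parity_eq_addb T x y :
  (parity T x == parity T y) = ~~ parity T [ffun l => x l (+) y l].
Proof.
rewrite -negb_add /parity -big_split /=.
by congr (~~ _); apply: eq_bigr => l _; rewrite ffunE.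
Qed.

Definition toggle (l : 'I_D) T := if l \in T then T :\ l else l |: T.

Lemma toggleK l : involutive (toggle l).
Proof.
move=> T; rewrite /toggle; case: (boolP (l \in T)) => lT.
  rewrite setD11; apply/setP => z; rewrite !inE; case: eqP => // ->; by rewrite lT.
rewrite setU11; apply/setP => z; rewrite !inE; case: eqP => // ->; by rewrite (negPf lT).
Qed.

Lemma parity_toggle l v T : v l -> parity (toggle l T) v = ~~ parity T v.
Proof.
move=> vl; rewrite /toggle /parity; case: (boolP (l \in T)) => lT.
  by rewrite [in RHS](big_setD1 _ lT) vl /= negbK.
by rewrite (big_setU1 _ lT) vl.
Qed.

Lemma sum_parity_even v : v != [ffun=> false] ->
  2 * (\sum_(T : {set 'I_D}) ~~ parity T v) = #|{set 'I_D}|.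
Proof.
move=> v_nz; have [l vl] : exists l, v l.
  apply/existsP; apply: contraR v_nz => /existsPn v0.
  by apply/eqP/ffunP => l; rewrite ffunE; apply/negbTE/v0.
have odd_even : \sum_(T : {set 'I_D}) (parity T v : nat)
              = \sum_(T : {set 'I_D}) ~~ parity T v.
  rewrite (reindex_inj (can_inj (toggleK l))) /=.
  by apply: eq_bigr => T _; rewrite parity_toggle.
rewrite mul2n -addnn -{1}odd_even -big_split /= -sum1_card.
by apply: eq_bigr => T _; case: (parity T v).
Qed.

End Parity.

Lemma sum_parity_agree D (x y : {ffun 'I_D -> bool}) : x != y ->
  2 * (\sum_(T : {set 'I_D}) (parity T x == parity T y)) = #|{set 'I_D}|.
Proof.
move=> x_neq_y; rewrite -(sum_parity_even (v := [ffun l => x l (+) y l])).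
  by congr (2 * _); apply: eq_bigr => T _; rewrite parity_eq_addb.
apply: contraNneq x_neq_y => xy0; apply/eqP/ffunP => l.
by move/ffunP/(_ l): xy0; rewrite !ffunE; case: (x l); case: (y l).
Qed.

Section Separation.
Variables (I : finType) (D : nat) (X : I -> {ffun 'I_D -> bool}).

Definition agree (S : {set 'I_D}) (p : I * I) := parity S (X p.1) == parity S (X p.2).

Definition unseparated (P : {set I * I}) (s : seq {set 'I_D}) :=
  [set p in P | all (agree ^~ p) s].

Lemma sum_card_agree (P : {set I * I}) : {in P, forall p, X p.1 != X p.2} ->
  \sum_(S : {set 'I_D}) 2 * #|[set p in P | agree S p]| = #|{set 'I_D}| * #|P|.
Proof.
move=> P_sep; rewrite -(big_distrr 2) /= [RHS]mulnC.
have card_sum S : #|[set p in P | agree S p]| = \sum_(p in P) agree S p.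
  rewrite -sum1dep_card big_mkcondr /=.
  by apply: eq_bigr => p _; case: (agree S p).
under eq_bigr => S _ do rewrite card_sum.
rewrite exchange_big /= big_distrr /= -sum_nat_const; apply: eq_bigr => p p_in_P.
exact: sum_parity_agree (P_sep p p_in_P).
Qed.

Lemma exists_halving_set (P : {set I * I}) : {in P, forall p, X p.1 != X p.2} ->
  exists S, 2 * #|[set p in P | agree S p]| <= #|P|.
Proof.
move=> P_sep; apply: exists_le_mean; first by apply/card_gt0P; exists set0.
by rewrite sum_card_agree.
Qed.

Lemma unseparated_cons P S s :
  unseparated P (S :: s) = [set p in unseparated P s | agree S p].
Proof. by apply/setP => p; rewrite !inE /= andbCA andbC. Qed.

Lemma exists_halving_seq (P : {set I * I}) : {in P, forall p, X p.1 != X p.2} ->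
  forall k, exists s, size s = k /\ #|unseparated P s| * 2 ^ k <= #|P|.
Proof.
move=> P_sep; elim=> [|k [s [size_s le_s]]].
  exists [::]; split => //; rewrite muln1; apply/subset_leq_card/subsetP => p.
  by rewrite inE => /andP[].
have [S le_S] : exists S, 2 * #|[set p in unseparated P s | agree S p]|
                            <= #|unseparated P s|.
  by apply: exists_halving_set => p; rewrite inE => /andP[/P_sep].
exists (S :: s); split; first by rewrite /= size_s.
rewrite unseparated_cons expnS mulnA (mulnC _ 2); apply: leq_trans le_s.
by rewrite leq_mul2r le_S orbT.
Qed.

End Separation.

Lemma parity_map_nth_neq D d (s : seq {set 'I_D}) (x y : {ffun 'I_D -> bool}) :
  size s = d -> ~~ all (fun S => parity S x == parity S y) s ->
  parity_map (fun k : 'I_d => nth set0 s k) x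
    != parity_map (fun k : 'I_d => nth set0 s k) y.
Proof.
move=> size_s /allPn [S S_in_s neq_S]; apply: contraNneq neq_S => /ffunP eq_xy.
have idx_lt : index S s < d by rewrite -size_s index_mem.
by move: (eq_xy (Ordinal idx_lt)); rewrite !ffunE /= nth_index // => ->.
Qed.

Lemma card_offdiag_lt n : 0 < n -> #|[set p : 'I_n * 'I_n | p.1 != p.2]| < n * n.
Proof.
move=> n_gt0.
have -> : n * n = #|[set: 'I_n * 'I_n]| by rewrite cardsT card_prod card_ord.
apply/proper_card; rewrite properT; apply/eqP => offdiag_full.
by have := in_setT (Ordinal n_gt0, Ordinal n_gt0); rewrite -offdiag_full inE eqxx.
Qed.

Theorem theorem8 (n D : nat) (hn : 1 <= n) (hD : 1 <= D)
  (X : 'I_n -> {ffun 'I_D -> bool}) (hX : injective X) :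
  exists S : 'I_(2 * up_log 2 n) -> {set 'I_D},
    forall i j : 'I_n, i != j -> parity_map S (X i) != parity_map S (X j).
Proof.
set d := 2 * up_log 2 n.
pose P := [set p : 'I_n * 'I_n | p.1 != p.2].
have P_sep : {in P, forall p, X p.1 != X p.2}.
  by move=> p; rewrite inE; apply: contra => /eqP/hX ->.
have card_P : #|P| < 2 ^ d.
  apply: leq_trans (card_offdiag_lt hn) _.
  by rewrite /d mulnC expnM -mulnn leq_mul // up_logP.
have [s [size_s le_s]] := exists_halving_seq P_sep d.
have unsep0 : unseparated X P s = set0.
  have : #|unseparated X P s| * 2 ^ d < 1 * 2 ^ d.
    by rewrite mul1n; apply: leq_ltn_trans le_s card_P.
  by rewrite ltn_pmul2r ?expn_gt0 // ltnS leqn0 cards_eq0 => /eqP.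
exists (fun k => nth set0 s k) => i j neq_ij; apply: parity_map_nth_neq size_s _.
have : (i, j) \notin unseparated X P s by rewrite unsep0 inE.
by rewrite !inE neq_ij.
Qed.
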